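(* For any positive integer $m$ and any integer $\Delta$ with $1\leq \Delta \leq m$ such that $(\Delta-1)m$ is even, there exists a finite simple undirected graph $G$ with $\operatorname{adim}(G)=m$ and maximum degree $\Delta$ such that $$\operatorname{adim}(G) = \frac{2(|V(G)|-1)}{\Delta+3}.$$
   Context: For a graph $G$, $d(u,v)$ is the shortest-path distance ($\infty$ if $u,v$ lie in different components), and $d_1(u,v)=\min(d(u,v),2)$. A set $A\subseteq V(G)$ is an adjacency resolving set if for all distinct $x,y\in V(G)$ there is $z\in A$ with $d_1(z,x)\neq d_1(z,y)$. The adjacency dimension $\operatorname{adim}(G)$ is the minimum cardinality of an adjacency resolving set. *)

From mathcomp Require Import all_boot all_order.
Set Implicit Arguments. Unset Strict Implicit. Unset Printing Implicit Defensive.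

Definition simple_graph (T : finType) (e : rel T) : Prop :=
  symmetric e /\ irreflexive e.

(* d_1(u,v) = min(d(u,v), 2): 0 if u = v, 1 if adjacent, 2 otherwise. *)
Definition d1 (T : finType) (e : rel T) (u v : T) : nat :=
  if u == v then 0 else if e u v then 1 else 2.

Definition adj_resolving (T : finType) (e : rel T) (A : {set T}) : bool :=
  [forall x : T, forall y : T,
     (x != y) ==> [exists z in A, d1 e z x != d1 e z y]].

(* Adjacency dimension: minimum cardinality of an adjacency resolving set
   (setT is always resolving, so the default #|T| is never below the min). *)
Definition adim (T : finType) (e : rel T) : nat :=
  \big[minn/#|T|]_(A : {set T} | adj_resolving e A) #|A|.

Definition maxdeg (T : finType) (e : rel T) : nat :=
  \max_(v : T) #|[set u | e v u]|.

(* Lower bound: if A is adjacency resolving, the vertices outside A have pairwise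
   distinct traces N(v) ∩ A, at most one of them empty and at most |A| of them
   singletons.  As the edges between A and its complement number at most |A| Δ,
   2 (n - 1 - |A|) <= |A| Δ + |A| + 2, i.e. 2 (n - 1) <= |A| (Δ + 3).

   Construction attaining it: A = Z/m, and outside A one vertex for the empty
   trace, one per singleton, one per chord {i, i + g} with 1 <= g <= (Δ - 1)/2
   and, when Δ is even (so m is even), one per diameter {i, i + m/2}.  Each
   a in A then lies in exactly Δ traces, so A is resolving, the maximum degree
   is Δ and the bound is attained by A, whence adim = m. *)

From mathcomp Require Import all_boot all_order.
From mathcomp Require Import zify.

Set Implicit Arguments.
Unset Strict Implicit.
Unset Printing Implicit Defensive.

Import Order.TTheory.

Lemma sum_nat_pred1 (T : finType) (a : T) : \sum_x (a == x) = 1.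
Proof.
by rewrite (bigD1 a) //= eqxx big1 // => x; rewrite eq_sym => /negPf ->.
Qed.

Lemma sum_nat_eq_addn (n c a : nat) :
  \sum_(k < n) (a == k + c) = (c <= a < c + n).
Proof. by elim: n => [|n IHn]; rewrite ?big_ord0 ?big_ord_recr /= ?IHn; lia. Qed.

Lemma leq_half n : n./2 <= n.
Proof. by rewrite leq_half_double -addnn leqW ?leq_addr. Qed.

Lemma modnD_lt (m i g : nat) : i < m -> g <= m ->
  (i + g) %% m = if i + g < m then i + g else i + g - m.
Proof.
move=> i_lt g_le; case: ltnP => [|le_m]; first exact: modn_small.
by rewrite -{1}(subnK le_m) modnDr modn_small //; lia.
Qed.

Lemma ord_bool (b : bool) : 'I_b -> b.
Proof. by case: b => // -[]. Qed.

Lemma card_set_sum (T : finType) (B : {pred T}) (P : pred T) :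
  #|[set x in B | P x]| = \sum_(x in B) P x.
Proof. by rewrite -sum1dep_card big_mkcondr. Qed.

Lemma double_card_injective_sets (T U : finType) (B : {pred T}) (A : {set U})
    (f : T -> {set U}) :
    {in B &, injective f} -> {in B, forall v, f v \subset A} ->
  2 * #|B| <= \sum_(v in B) #|f v| + #|A| + 2.
Proof.
move=> f_inj fA.
pose B0 := [set v in B | #|f v| == 0]; pose B1 := [set v in B | #|f v| == 1].
have injB (P : pred T) : #|f @: [set v in B | P v]| = #|[set v in B | P v]|.
  by apply: card_in_imset => x y /setIdP[xB _] /setIdP[yB _]; apply: f_inj.
have B0_le1 : #|B0| <= 1.
  rewrite -injB; apply: (@leq_trans #|[set @set0 U]|); last by rewrite cards1.
  apply: subset_leq_card.
  by apply/subsetP => _ /imsetP[v /setIdP[_ /eqP/cards0_eq ->] ->]; rewrite set11.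
have B1_leA : #|B1| <= #|A|.
  rewrite -injB; apply: leq_trans (leq_imset_card (set1 (T:=U)) A).
  apply: subset_leq_card; apply/subsetP => _ /imsetP[v /setIdP[vB /cards1P[a fv]] ->].
  by rewrite fv imset_f // -sub1set -fv fA.
have : \sum_(v in B) 2 <=
    \sum_(v in B) (#|f v| + (#|f v| == 0) + (#|f v| == 0) + (#|f v| == 1)).
  by apply: leq_sum => v _; case: #|f v| => [|[|n]].
rewrite sum_nat_const !big_split /= -!card_set_sum -/B0 -/B1.
lia.
Qed.

Section AdjacencyTraces.
Variables (T : finType) (e : rel T) (A : {set T}).

Definition adj_trace (v : T) : {set T} := [set a in A | e a v].

Lemma adj_trace_inj : adj_resolving e A -> {in ~: A &, injective adj_trace}.
Proof.
move=> /forallP resA x y; rewrite !inE => xA yA trxy; apply/eqP/negPn/negP => xy.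
have /existsP[z /andP[zA]] := implyP (forallP (resA x) y) xy.
have zx : z != x by apply: contraNneq xA => <-.
have zy : z != y by apply: contraNneq yA => <-.
have : (z \in adj_trace x) = (z \in adj_trace y) by rewrite trxy.
by rewrite /d1 (negPf zx) (negPf zy) !inE zA /= => ->; rewrite eqxx.
Qed.

Lemma sum_card_adj_trace :
  \sum_(v in ~: A) #|adj_trace v| <= \sum_(a in A) #|[set v | e a v]|.
Proof.
rewrite (eq_bigr (fun v => \sum_(a in A) e a v)); last first.
  by move=> v _; rewrite -card_set_sum.
rewrite exchange_big /=; apply: leq_sum => a _; rewrite -card_set_sum.
by apply: subset_leq_card; apply/subsetP => v /setIdP[_ eav]; rewrite inE.
Qed.

End AdjacencyTraces.

Lemma adj_resolving_card_lb (T : finType) (e : rel T) (D : nat) (A : {set T}) :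
    {in A, forall a, #|[set v | e a v]| <= D} -> adj_resolving e A ->
  2 * (#|T| - 1) <= #|A| * (D + 3).
Proof.
move=> degA resA.
have trA v : v \in ~: A -> adj_trace e A v \subset A.
  by move=> _; apply/subsetP => a /setIdP[].
have := double_card_injective_sets (adj_trace_inj resA) trA.
have := sum_card_adj_trace e A.
have : \sum_(a in A) #|[set v | e a v]| <= #|A| * D.
  by rewrite -sum_nat_const; apply: leq_sum.
have := cardsC A.
nia.
Qed.

Lemma adim_eq_card (T : finType) (e : rel T) (A : {set T}) :
    adj_resolving e A -> (forall B, adj_resolving e B -> #|A| <= #|B|) ->
  adim e = #|A|.
Proof.
move=> resA minA; apply/eqP; rewrite /adim -minEnat eq_le; apply/andP; split.
  exact: bigmin_le_cond.
by apply/bigmin_geP; split; [exact: max_card | exact: minA].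
Qed.

Lemma adim_eq_extremal (T : finType) (e : rel T) (A : {set T}) :
    adj_resolving e A -> 2 * (#|T| - 1) = #|A| * (maxdeg e + 3) ->
  adim e = #|A|.
Proof.
move=> resA extA; apply: (adim_eq_card resA) => B resB.
have degB : {in B, forall v, #|[set u | e v u]| <= maxdeg e}.
  by move=> v _; apply: (leq_bigmax (F := fun v => #|[set u | e v u]|)).
rewrite -(@leq_pmul2r (maxdeg e + 3)) ?addn3 // -addn3 -extA.
exact: adj_resolving_card_lb degB resB.
Qed.

Section TraceGraph.
Variables (m : nat) (W : finType) (tr : W -> {set 'I_m}).

Definition trace_graph : rel ('I_m + W) := fun u v =>
  match u, v with
  | inl a, inr w | inr w, inl a => a \in tr w
  | _, _ => false
  end.

Lemma trace_graph_simple : simple_graph trace_graph.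
Proof. by split; [case=> [a|w] [b|w'] | case]. Qed.

Lemma trace_graph_resolving :
  injective tr -> adj_resolving trace_graph [set inl a | a : 'I_m].
Proof.
move=> tr_inj; apply/'forall_forallP => x y; apply/implyP => xy.
have d1_self u : d1 trace_graph u u = 0 by rewrite /d1 eqxx.
have d1_pos u v : u != v -> d1 trace_graph u v != 0.
  by rewrite /d1 => /negPf ->; case: ifP.
apply/existsP; case: x y xy => [a|w] [b|w'] xy.
- by exists (inl a); rewrite imset_f // d1_self eq_sym d1_pos.
- by exists (inl a); rewrite imset_f // d1_self eq_sym d1_pos.
- by exists (inl b); rewrite imset_f // d1_self d1_pos // eq_sym.
have /existsP[a neq_a] : [exists a, (a \in tr w) != (a \in tr w')].
  rewrite -negb_forall; apply: contra xy => /forallP eq_tr.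
  by apply/eqP; congr inr; apply/tr_inj/setP => a; apply/eqP/eq_tr.
exists (inl a); rewrite imset_f // /d1 /=.
by move: neq_a; case: (a \in tr w); case: (a \in tr w').
Qed.

Lemma card_trace_graph_inl (a : 'I_m) :
  #|[set u | trace_graph (inl a) u]| = #|[set w | a \in tr w]|.
Proof.
rewrite -(card_imset _ (@inr_inj 'I_m W)); apply: eq_card.
move=> -[b|w]; rewrite inE /= ?(mem_imset _ _ inr_inj) ?inE //.
by apply/esym/imsetP => -[].
Qed.

Lemma card_trace_graph_inr (w : W) :
  #|[set u | trace_graph (inr w) u]| = #|tr w|.
Proof.
rewrite -(card_imset _ (@inl_inj 'I_m W)); apply: eq_card.
move=> -[a|w']; rewrite inE /= ?(mem_imset _ _ inl_inj) //.
by apply/esym/imsetP => -[].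
Qed.

Lemma maxdeg_trace_graph (D : nat) : 0 < m ->
    (forall a, #|[set w | a \in tr w]| = D) -> (forall w, #|tr w| <= D) ->
  maxdeg trace_graph = D.
Proof.
move=> m_gt0 degA degW; apply/eqP; rewrite eqn_leq; apply/andP; split.
  apply/bigmax_leqP => -[a|w] _.
    by rewrite card_trace_graph_inl degA.
  by rewrite card_trace_graph_inr.
rewrite -(degA (Ordinal m_gt0)) -card_trace_graph_inl.
exact: (leq_bigmax (F := fun v => #|[set u | trace_graph v u]|)).
Qed.

Lemma adim_trace_graph : injective tr ->
  2 * (m + #|W| - 1) = m * (maxdeg trace_graph + 3) -> adim trace_graph = m.
Proof.
move=> tr_inj bound_attained.
have cardA : #|[set inl a | a : 'I_m] : {set 'I_m + W}| = m.
  by rewrite card_imset ?card_ord //; exact: inl_inj.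
rewrite -[RHS]cardA; apply: adim_eq_extremal; first exact: trace_graph_resolving.
by rewrite card_sum card_ord cardA; exact: bound_attained.
Qed.

End TraceGraph.

Section Chords.
Variable m : nat.

Definition rot (g : nat) (i : 'I_m) : 'I_m :=
  Ordinal (ltn_pmod (i + g) (leq_ltn_trans (leq0n i) (ltn_ord i))).

Lemma val_rot g i : val (rot g i) = (i + g) %% m.
Proof. by []. Qed.

Lemma rot_inj g : g <= m -> injective (rot g).
Proof.
move=> g_le i j /(congr1 val); rewrite !val_rot !modnD_lt //.
move=> eq_ij; apply: ord_inj; have := ltn_ord i; have := ltn_ord j.
by move: eq_ij; case: ifP; case: ifP; lia.
Qed.

Definition chord (i : 'I_m) (g : nat) : {set 'I_m} := [set i; rot g i].

Lemma rot_neq g i : 0 < g < m -> rot g i != i.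
Proof.
move=> /andP[g_gt0 g_lt]; apply/eqP => /(congr1 val) /=.
by rewrite modnD_lt ?(ltnW g_lt) //; case: ifP; lia.
Qed.

Lemma card_chord i g : 0 < g < m -> #|chord i g| = 2.
Proof. by move=> g_range; rewrite cards2 eq_sym rot_neq. Qed.

(* A diameter (g.*2 = m) is named only from its smaller endpoint. *)
Definition chord_ok (i : 'I_m) (g : nat) : bool :=
  [&& 0 < g, g.*2 <= m & (g.*2 == m) ==> (i < g)].

Lemma chord_inj i g j g' :
  chord_ok i g -> chord_ok j g' -> chord i g = chord j g' -> (i, g) = (j, g').
Proof.
move=> /and3P[g_gt0 g_le ig] /and3P[g'_gt0 g'_le jg'] eq_ch.
have mem x : (x \in chord i g) = (x \in chord j g') by rewrite eq_ch.
have i_lt := ltn_ord i; have j_lt := ltn_ord j.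
have [g_lem g'_lem] : g <= m /\ g' <= m by lia.
suff [/ord_inj -> ->] : (i : nat) = j /\ g = g' by [].
move: (mem i) (mem (rot g i)) (mem j) (mem (rot g' j)).
rewrite !inE !eqxx -!val_eqE /= !modnD_lt //.
by case: ifP; case: ifP; lia.
Qed.

Lemma chord_ok_gap i g : chord_ok i g -> 0 < g < m.
Proof. by case/and3P=> g_gt0 g_le _; lia. Qed.

Lemma sum_chord (a : 'I_m) g : 0 < g < m -> \sum_i (a \in chord i g) = 2.
Proof.
move=> g_range; have g_le : g <= m by case/andP: g_range => _ /ltnW.
have mem_chord i : a \in chord i g = (a == i) + (a == rot g i) :> nat.
  rewrite !inE; case: eqP => [->|] //=.
  by rewrite eq_sym (negPf (rot_neq i g_range)).
rewrite (eq_bigr _ (fun i _ => mem_chord i)) big_split /= sum_nat_pred1.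
by rewrite -[in RHS](sum_nat_pred1 a) [in RHS](reindex_inj (rot_inj g_le)).
Qed.

Definition half_ord (k : 'I_(m./2)) : 'I_m := widen_ord (leq_half m) k.

Lemma sum_chord_half (a : 'I_m) : ~~ odd m ->
  \sum_(k < m./2) (a \in chord (half_ord k) m./2) = 1.
Proof.
move=> m_even; have m_halves : m = m./2 + m./2 by rewrite addnn even_halfK.
have a_lt := ltn_ord a.
have mem_chord (k : 'I_(m./2)) : a \in chord (half_ord k) m./2 =
    ((a : nat) == k + 0) + ((a : nat) == k + m./2) :> nat.
  have k_lt := ltn_ord k.
  rewrite !inE -!val_eqE /= modnD_lt ?leq_half //; last lia.
  by case: ifP; lia.
rewrite (eq_bigr _ (fun k _ => mem_chord k)) big_split /= !sum_nat_eq_addn.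
lia.
Qed.

End Chords.

Section ExtremalGraph.
Variables (m r : nat) (o : bool).

Definition extremal_chord_vertex : finType := ('I_m * 'I_r + 'I_(m./2) * 'I_o)%type.

Definition extremal_vertex : finType := (option 'I_m + extremal_chord_vertex)%type.

Definition extremal_chord (c : extremal_chord_vertex) : 'I_m * nat :=
  match c with
  | inl (i, d) => (i, d.+1)
  | inr (k, _) => (half_ord k, m./2)
  end.

Definition extremal_trace (w : extremal_vertex) : {set 'I_m} :=
  match w with
  | inl x => if x is Some a then [set a] else set0
  | inr c => chord (extremal_chord c).1 (extremal_chord c).2
  end.

Hypotheses (o_r_lt : o + r.*2 < m) (o_even : o -> ~~ odd m).

Lemma extremal_halves : o -> m./2.*2 = m.
Proof. by move/o_even; exact: even_halfK. Qed.

Lemma extremal_chord_ok c : chord_ok (extremal_chord c).1 (extremal_chord c).2.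
Proof.
case: c => [[i d]|[k t]] /=; rewrite /chord_ok.
  by have := ltn_ord d; lia.
have m_halves := extremal_halves (ord_bool t).
by have := ltn_ord k; rewrite /=; lia.
Qed.

Lemma extremal_chord_inj : injective extremal_chord.
Proof.
move=> [[i d]|[k t]] [[i' d']|[k' t']] /= [].
- by move=> -> /ord_inj ->.
- move=> _ eq_d; have := extremal_halves (ord_bool t'); have := ltn_ord d; lia.
- move=> _ eq_d; have := extremal_halves (ord_bool t); have := ltn_ord d'; lia.
move=> /ord_inj ->; congr (inr (_, _)); apply: ord_inj.
by have := ltn_ord t; have := ltn_ord t'; lia.
Qed.

Lemma card_extremal_trace_inl x : #|extremal_trace (inl x)| <= 1.
Proof. by case: x => [a|]; rewrite /= ?cards1 ?cards0. Qed.

Lemma card_extremal_trace_inr c : #|extremal_trace (inr c)| = 2.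
Proof. exact/card_chord/chord_ok_gap/extremal_chord_ok. Qed.

Lemma extremal_trace_inj : injective extremal_trace.
Proof.
move=> [x|c] [x'|c'] eq_tr; last 1 first.
- congr inr; apply: extremal_chord_inj.
  rewrite [extremal_chord c]surjective_pairing [extremal_chord c']surjective_pairing.
  exact: chord_inj (extremal_chord_ok c) (extremal_chord_ok c') eq_tr.
- case: x x' eq_tr => [a|] [b|] //= eq_tr; first by rewrite (set1_inj eq_tr).
  + by have := cards1 a; rewrite eq_tr cards0.
  + by have := cards1 b; rewrite -eq_tr cards0.
- by have := card_extremal_trace_inl x; rewrite eq_tr card_extremal_trace_inr.
- by have := card_extremal_trace_inl x'; rewrite -eq_tr card_extremal_trace_inr.
Qed.

Lemma card_extremal_trace w : #|extremal_trace w| <= (o + r.*2).+1.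
Proof.
case: w => [x|c]; first by rewrite (leq_trans (card_extremal_trace_inl x)).
rewrite card_extremal_trace_inr.
by case: c => [[i d]|[k t]]; [have := ltn_ord d | have := ord_bool t]; lia.
Qed.

Lemma card_extremal_star (a : 'I_m) :
  #|[set w | a \in extremal_trace w]| = (o + r.*2).+1.
Proof.
transitivity (\sum_w (a \in extremal_trace w : nat)); first exact: (card_set_sum predT).
rewrite !big_sumType /=.
have -> : \sum_(x : option 'I_m) (a \in extremal_trace (inl x)) = 1.
  by rewrite -(sum_nat_pred1 (Some a)); apply: eq_bigr => -[b|] _; rewrite /= ?inE.
have -> : \sum_(p : 'I_m * 'I_r) (a \in extremal_trace (inr (inl p))) = r.*2.
  rewrite (eq_bigr (fun p => (a \in chord p.1 (nat_of_ord p.2).+1 : nat))); last by case.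
  rewrite -(pair_bigA _ (fun i (d : 'I_r) => (a \in chord i d.+1 : nat))) exchange_big /=.
  rewrite (eq_bigr (fun=> 2)) ?sum_nat_const ?card_ord ?muln2 // => d _.
  by apply: sum_chord; have := ltn_ord d; lia.
have -> : \sum_(q : 'I_(m./2) * 'I_o) (a \in extremal_trace (inr (inr q))) = o.
  rewrite (eq_bigr (fun q => (a \in chord (half_ord q.1) m./2 : nat))); last by case.
  rewrite -(pair_bigA _ (fun k (t : 'I_o) => (a \in chord (half_ord k) m./2 : nat))).
  rewrite exchange_big /= (eq_bigr (fun=> 1)) ?sum_nat_const ?card_ord ?muln1 // => t _.
  exact/sum_chord_half/o_even/ord_bool.
lia.
Qed.

Lemma card_extremal_graph :
  2 * (m + #|extremal_vertex| - 1) = m * ((o + r.*2).+1 + 3).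
Proof.
rewrite card_sum card_option card_sum !card_prod !card_ord.
case: (boolP o) => [/extremal_halves | _]; last by rewrite !muln0; lia.
set h := m./2 => m_halves; rewrite -m_halves; lia.
Qed.

End ExtremalGraph.

Theorem theorem3p1 (m Delta : nat) :
  0 < m -> 1 <= Delta <= m -> ~~ odd ((Delta - 1) * m) ->
  exists (T : finType) (e : rel T),
    [/\ simple_graph e, adim e = m, maxdeg e = Delta &
        adim e * (Delta + 3) = 2 * (#|T| - 1)].
Proof.
move=> m_gt0 /andP[Delta_gt0 Delta_le] even_Delta_m.
set r := (Delta - 1)./2; set o := odd (Delta - 1).
have DeltaE : Delta = (o + r.*2).+1 by rewrite odd_double_half subn1 prednK.
have o_r_lt : o + r.*2 < m by lia.
have o_even : o -> ~~ odd m by move=> o_odd; move: even_Delta_m; rewrite oddM -/o o_odd.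
pose e := trace_graph (@extremal_trace m r o).
have maxdegE : maxdeg e = Delta.
  rewrite DeltaE; apply: maxdeg_trace_graph => //.
    exact: card_extremal_star.
  exact: card_extremal_trace.
have adimE : adim e = m.
  apply: adim_trace_graph; first exact: extremal_trace_inj.
  by rewrite maxdegE DeltaE card_extremal_graph.
exists _, e; split=> //; first exact: trace_graph_simple.
by rewrite adimE card_sum card_ord DeltaE card_extremal_graph.
Qed.
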